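(* Let $P$ be a poset. Then $P$ is $3$-representable if and only if $P\models\psi_n$ for all $n\in\omega$.
   Context: A poset $P$ is $3$-representable if there is a set $X$ and an order embedding $h:P\to\wp(X)$ ($\wp(X)$ ordered by inclusion) such that whenever $S\subseteq P$ with $|S|<3$ and $\bigwedge S$ exists in $P$ then $h(\bigwedge S)=\bigcap h[S]$ (with $\bigcap\emptyset=X$), and whenever $T\subseteq P$ with $|T|<3$ and $\bigvee T$ exists in $P$ then $h(\bigvee T)=\bigcup h[T]$. The sentences $\psi_n$ are in the signature with one binary relation $\leq$: let $J(x,y,z)$ be $x\leq z\wedge y\leq z\wedge\forall w((x\leq w\wedge y\leq w)\to z\leq w)$, $M(x,y,z)$ the dual formula (z is the meet of $x,y$), $C_k(x_1,\ldots,x_k,y)=\bigvee_{i=1}^k(y=x_i)$ (false for $k=0$), $D_k=\neg C_k$, $\vec{x}_m=(x_1,\ldots,x_m)$. Define $\phi_{m0}(\vec{x}_m,y)=D_m(\vec{x}_m,y)$ and $\phi_{m(n+1)}(\vec{x}_m,y)=\forall a\forall b\forall c\Big(\big(\exists d(C_m(\vec{x}_m,d)\wedge d\leq a)\to\phi_{(m+1)n}(\vec{x}_m,a,y)\big)\wedge\big((C_m(\vec{x}_m,a)\wedge C_m(\vec{x}_m,b)\wedge M(a,b,c))\to\phi_{(m+1)n}(\vec{x}_m,c,y)\big)\wedge\big((C_m(\vec{x}_m,c)\wedge J(a,b,c))\to(\phi_{(m+1)n}(\vec{x}_m,a,y)\vee\phi_{(m+1)n}(\vec{x}_m,b,y))\big)\Big)$,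 and $\psi_n=\forall x\forall y(\neg(x\leq y)\to\phi_{1n}(x,y))$. *)

From Stdlib Require Import List.
Import ListNotations.

Section PosetDefs.
Variable T : Type.
Variable le : T -> T -> Prop.

Definition is_poset : Prop :=
  (forall x, le x x) /\
  (forall x y, le x y -> le y x -> x = y) /\
  (forall x y z, le x y -> le y z -> le x z).

Definition is_inf (S : T -> Prop) (m : T) : Prop :=
  (forall s, S s -> le m s) /\ (forall w, (forall s, S s -> le w s) -> le w m).

Definition is_sup (S : T -> Prop) (j : T) : Prop :=
  (forall s, S s -> le s j) /\ (forall w, (forall s, S s -> le s w) -> le j w).

(* 3-representability: an order embedding h : P -> powerset(X) preserving
   all existing meets and joins of subsets S with |S| < 3
   (finite subsets of size < 3 are exactly those enumerated by a list of
   length < 3); subsets of X are predicates, with extensional equality. *)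
Definition three_representable : Prop :=
  exists (X : Type) (h : T -> X -> Prop),
    (forall p q, le p q <-> (forall x, h p x -> h q x)) /\
    (forall (l : list T) (m : T), length l < 3 ->
        is_inf (fun s => In s l) m ->
        forall x, h m x <-> (forall s, In s l -> h s x)) /\
    (forall (l : list T) (j : T), length l < 3 ->
        is_sup (fun s => In s l) j ->
        forall x, h j x <-> (exists s, In s l /\ h s x)).

Definition Jf (x y z : T) : Prop :=
  le x z /\ le y z /\ forall w, (le x w /\ le y w) -> le z w.
Definition Mf (x y z : T) : Prop :=
  le z x /\ le z y /\ forall w, (le w x /\ le w y) -> le w z.

(* Semantics of phi_{m n}(xs, y), where xs is the tuple (x_1,...,x_m),
   m = length xs; C_m(xs, d) is (In d xs). *)
Fixpoint phi (n : nat) (xs : list T) (y : T) : Prop :=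
  match n with
  | O => ~ In y xs
  | S n' =>
      forall a b c : T,
        ((exists d, In d xs /\ le d a) -> phi n' (xs ++ [a]) y) /\
        ((In a xs /\ In b xs /\ Mf a b c) -> phi n' (xs ++ [c]) y) /\
        ((In c xs /\ Jf a b c) -> (phi n' (xs ++ [a]) y \/ phi n' (xs ++ [b]) y))
  end.

Definition psi (n : nat) : Prop :=
  forall x y : T, ~ le x y -> phi n [x] y.

End PosetDefs.

From Stdlib Require Import List Lia Classical.
From mathcomp Require classical_sets.
Import ListNotations.

(** A point [pt] of a 3-representation [h] yields the set [{p | h p pt}], which
    is up-closed, closed under existing binary meets and prime for existing
    binary joins; by induction on [n], [phi n xs y] holds whenever such a set
    contains [xs] but not [y].  A point separating [x] from [y] thus gives [psi n].

    Conversely, "[phi n xs y] for every [n]" survives each of the three moves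
    (going up, taking a meet, choosing a side of a join), the last one because a
    side winning for infinitely many [n] wins for all of them.  By Zorn's lemma
    take a maximal [A] such that [x :: l] wins for every finite [l] inside [A];
    maximality turns the three moves into the closure properties of a prime
    filter containing [x] but not [y].  The nonempty proper prime filters then
    form a 3-representation. *)

Ltac solve_incl :=
  let s := fresh "s" in
  intros s; simpl; rewrite ?in_app_iff; simpl; tauto.

Lemma Forall_bigcup_chain {A : Type} (C : (A -> Prop) -> Prop) (l : list A) :
  classical_sets.total_on C classical_sets.subset ->
  Forall (classical_sets.bigcup C (fun X => X)) l ->
  l = [] \/ exists2 X, C X & Forall X l.
Proof.
  intros Htot; induction 1 as [|z l [Z CZ Zz] _ IH]; auto; right.
  destruct IH as [->|[X CX HX]]; [exists Z; auto|].
  destruct (Htot X Z CX CZ) as [HXZ|HZX].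
  - exists Z; [|constructor; [|eapply Forall_impl; [exact HXZ|]]]; auto.
  - exists X; [|constructor]; auto.
Qed.

Lemma Forall_split {A : Type} (P : A -> Prop) (a : A) (l : list A) :
  Forall (fun s => P s \/ s = a) l -> exists l0, Forall P l0 /\ incl l (l0 ++ [a]).
Proof.
  induction 1 as [|z l [Pz| ->] _ [l0 [Hl0 Hincl]]].
  - exists []; split; [constructor|intros s []].
  - exists (z :: l0); split; [constructor; auto|exact (incl_app_app (incl_refl [z]) Hincl)].
  - exists l0; split; [|apply incl_cons; [apply in_or_app; simpl|]]; auto.
Qed.

Section PrimeFilters.
Variables (T : Type) (le : T -> T -> Prop).

Definition up_closed (F : T -> Prop) : Prop := forall a b, F a -> le a b -> F b.
Definition meet_closed (F : T -> Prop) : Prop :=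
  forall a b c, F a -> F b -> Mf T le a b c -> F c.
Definition join_prime (F : T -> Prop) : Prop :=
  forall a b c, F c -> Jf T le a b c -> F a \/ F b.
(** Neither nonemptiness nor properness is required; the points of the
    representation add them. *)
Definition prime_filter (F : T -> Prop) : Prop :=
  up_closed F /\ meet_closed F /\ join_prime F.

Lemma is_inf_pair a b m : is_inf T le (fun s => In s [a; b]) m <-> Mf T le a b m.
Proof.
  unfold is_inf, Mf; split.
  - intros [Hlow Hglb]; repeat split; try (apply Hlow; simpl; auto).
    intros w [Ha Hb]; apply Hglb; intros s [<-|[<-|[]]]; auto.
  - intros [Ha [Hb Hglb]]; split; [intros s [<-|[<-|[]]]; auto|].
    intros w Hw; apply Hglb; split; apply Hw; simpl; auto.
Qed.

Lemma is_sup_pair a b j : is_sup T le (fun s => In s [a; b]) j <-> Jf T le a b j.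
Proof.
  unfold is_sup, Jf; split.
  - intros [Hup Hlub]; repeat split; try (apply Hup; simpl; auto).
    intros w [Ha Hb]; apply Hlub; intros s [<-|[<-|[]]]; auto.
  - intros [Ha [Hb Hlub]]; split; [intros s [<-|[<-|[]]]; auto|].
    intros w Hw; apply Hlub; split; apply Hw; simpl; auto.
Qed.

Lemma phi_incl n y : forall l l', incl l' l -> phi T le n l y -> phi T le n l' y.
Proof.
  induction n as [|n IH]; simpl; intros l l' Hincl Hphi.
  - intros Hy; apply Hphi, Hincl, Hy.
  - assert (Hsnoc : forall a, incl (l' ++ [a]) (l ++ [a])) by (intro; apply incl_app_app; auto using incl_refl).
    intros a b c; destruct (Hphi a b c) as [Hup [Hmeet Hjoin]]; split; [|split].
    + intros [d [Hd Hda]]; apply (IH _ _ (Hsnoc a)), Hup; eauto.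
    + intros [Ha [Hb Hm]]; apply (IH _ _ (Hsnoc c)), Hmeet; auto.
    + intros [Hc Hj]; destruct (Hjoin (conj (Hincl _ Hc) Hj)); [left|right]; eapply IH; eauto.
Qed.

Lemma phi_prime_filter F y : prime_filter F -> ~ F y ->
  forall n l, Forall F l -> phi T le n l y.
Proof.
  intros [Fup [Fmeet Fjoin]] Fy n; induction n as [|n IH]; simpl; intros l Hl.
  - intros Hy; apply Fy; exact (proj1 (Forall_forall F l) Hl y Hy).
  - rewrite Forall_forall in Hl.
    assert (Hsnoc : forall a, F a -> phi T le n (l ++ [a]) y)
      by (intros a Fa; apply IH, Forall_app; split; [apply Forall_forall, Hl|auto]).
    intros a b c; split; [|split].
    + intros [d [Hd Hda]]; apply Hsnoc, (Fup d); auto.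
    + intros [Ha [Hb Hm]]; apply Hsnoc, (Fmeet a b); auto.
    + intros [Hc Hj]; destruct (Fjoin a b c); auto.
Qed.

Lemma psi_of_representation : three_representable T le -> forall n, psi T le n.
Proof.
  intros [X [h [Hemb [Hinf Hsup]]]] n x y Hxy.
  assert (Hpt : exists pt, h x pt /\ ~ h y pt).
  { apply NNPP; intros Hno; apply Hxy, Hemb; intros pt Hx.
    apply NNPP; intros Hy; apply Hno; eauto. }
  destruct Hpt as [pt [Hx Hy]].
  assert (Hprime : prime_filter (fun p => h p pt)); [split; [|split]|].
  - intros a b Ha Hab; exact (proj1 (Hemb a b) Hab pt Ha).
  - intros a b c Ha Hb Hm.
    apply (Hinf [a; b] c ltac:(simpl; lia) (proj2 (is_inf_pair a b c) Hm)).
    intros s [<-|[<-|[]]]; auto.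
  - intros a b c Hc Hj.
    destruct (proj1 (Hsup [a; b] c ltac:(simpl; lia) (proj2 (is_sup_pair a b c) Hj) pt) Hc)
      as [s [[<-|[<-|[]]] Hs]]; auto.
  - apply (phi_prime_filter _ y Hprime Hy); auto.
Qed.

End PrimeFilters.

Section Separation.
Variables (T : Type) (le : T -> T -> Prop).
Hypothesis le_refl : forall x, le x x.

Lemma phi_S n l y : phi T le (S n) l y -> phi T le n l y.
Proof.
  revert l; induction n as [|n IH]; intros l Hphi.
  - intros Hy; destruct (Hphi y y y) as [Hup _].
    apply (Hup (ex_intro _ y (conj Hy (le_refl y)))), in_or_app; simpl; auto.
  - intros a b c; destruct (Hphi a b c) as [Hup [Hmeet Hjoin]]; split; [|split].
    + intros H; exact (IH _ (Hup H)).
    + intros H; exact (IH _ (Hmeet H)).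
    + intros H; destruct (Hjoin H); [left|right]; auto.
Qed.

Lemma phi_le n m l y : n <= m -> phi T le m l y -> phi T le n l y.
Proof. induction 1; auto using phi_S. Qed.

Definition phi_omega (l : list T) (y : T) : Prop := forall n, phi T le n l y.

Lemma phi_omega_incl l l' y : incl l' l -> phi_omega l y -> phi_omega l' y.
Proof. intros Hincl Hl n; exact (phi_incl T le n y l l' Hincl (Hl n)). Qed.

Lemma phi_omega_up l y d a :
  phi_omega l y -> In d l -> le d a -> phi_omega (l ++ [a]) y.
Proof. intros Hl Hd Hda n; apply (proj1 (Hl (S n) a a a)); eauto. Qed.

Lemma phi_omega_meet l y a b c :
  phi_omega l y -> In a l -> In b l -> Mf T le a b c -> phi_omega (l ++ [c]) y.
Proof. intros Hl Ha Hb Hm n; apply (proj1 (proj2 (Hl (S n) a b c))); auto. Qed.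

Lemma phi_omega_join l y a b c : phi_omega l y -> In c l -> Jf T le a b c ->
  phi_omega (l ++ [a]) y \/ phi_omega (l ++ [b]) y.
Proof.
  intros Hl Hc Hj; apply NNPP; intros Hno; apply not_or_and in Hno as [Na Nb].
  apply not_all_ex_not in Na as [na Na]; apply not_all_ex_not in Nb as [nb Nb].
  destruct (proj2 (proj2 (Hl (S (max na nb)) a b c)) (conj Hc Hj)) as [H|H].
  - apply Na; eapply phi_le; [|exact H]; lia.
  - apply Nb; eapply phi_le; [|exact H]; lia.
Qed.

Definition omega_consistent (x y : T) (A : T -> Prop) : Prop :=
  forall l, Forall A l -> phi_omega (x :: l) y.

Lemma maximal_omega_consistent x y : phi_omega [x] y ->
  exists A, omega_consistent x y A /\
    forall B, classical_sets.proper A B -> ~ omega_consistent x y B.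
Proof.
  intros Hxy; apply classical_sets.Zorn_bigcup; intros C Ccons Ctot l Hl.
  destruct (Forall_bigcup_chain C l Ctot Hl) as [->|[X CX HX]];
    [exact Hxy|exact (Ccons X CX l HX)].
Qed.

Section MaximalSet.
Variables (x y : T) (A : T -> Prop).
Hypothesis A_cons : omega_consistent x y A.
Hypothesis A_max : forall B, classical_sets.proper A B -> ~ omega_consistent x y B.

Lemma maximal_mem a : (forall l, Forall A l -> phi_omega (x :: l ++ [a]) y) -> A a.
Proof.
  intros Ha; apply NNPP; intros Na.
  apply (A_max (fun s => A s \/ s = a)).
  - split; [intros s As; left; exact As|intros Hsub; exact (Na (Hsub a (or_intror eq_refl)))].
  - intros l Hl; destruct (Forall_split A a l Hl) as [l0 [Hl0 Hincl]].
    apply (phi_omega_incl _ _ _ (incl_app_app (incl_refl [x]) Hincl) (Ha l0 Hl0)).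
Qed.

Lemma maximal_mem_x : A x.
Proof.
  apply maximal_mem; intros l Hl.
  refine (phi_omega_incl _ _ _ _ (A_cons l Hl)); solve_incl.
Qed.

Lemma maximal_not_mem_y : ~ A y.
Proof. intros Ay; apply (A_cons [y] (Forall_cons _ Ay (Forall_nil _)) 0); simpl; auto. Qed.

Lemma maximal_up_closed : up_closed T le A.
Proof.
  intros d a Ad Hda; apply maximal_mem; intros l Hl.
  assert (Hd : phi_omega ((x :: d :: l) ++ [a]) y)
    by (apply (phi_omega_up _ _ d); [apply A_cons; constructor|simpl|]; auto).
  refine (phi_omega_incl _ _ _ _ Hd); solve_incl.
Qed.

Lemma maximal_meet_closed : meet_closed T le A.
Proof.
  intros a b c Aa Ab Hm; apply maximal_mem; intros l Hl.
  assert (Hc : phi_omega ((x :: a :: b :: l) ++ [c]) y)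
    by (apply (phi_omega_meet _ _ a b); [apply A_cons; repeat constructor|simpl..|]; auto).
  refine (phi_omega_incl _ _ _ _ Hc); solve_incl.
Qed.

Lemma maximal_join_prime : join_prime T le A.
Proof.
  intros a b c Ac Hj.
  assert (Hwit : forall e, ~ A e -> exists l, Forall A l /\ ~ phi_omega (x :: l ++ [e]) y).
  { intros e Ne; apply NNPP; intros Hno; apply Ne, maximal_mem; intros l Hl.
    apply NNPP; intros Hl'; apply Hno; eauto. }
  apply NNPP; intros Hno; apply not_or_and in Hno as [Na Nb].
  destruct (Hwit a Na) as [la [Hla Na']], (Hwit b Nb) as [lb [Hlb Nb']].
  assert (Hc : phi_omega (x :: c :: la ++ lb) y)
    by (apply A_cons; constructor; [|apply Forall_app]; auto).
  destruct (phi_omega_join _ _ a b c Hc) as [H|H]; [simpl; auto|exact Hj| |].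
  - apply Na'; refine (phi_omega_incl _ _ _ _ H); solve_incl.
  - apply Nb'; refine (phi_omega_incl _ _ _ _ H); solve_incl.
Qed.

End MaximalSet.

Lemma prime_filter_separation x y : phi_omega [x] y ->
  exists F, prime_filter T le F /\ F x /\ ~ F y.
Proof.
  intros Hxy; destruct (maximal_omega_consistent x y Hxy) as [A [A_cons A_max]].
  exists A; split; [split; [|split]|split].
  - exact (maximal_up_closed x y A A_cons A_max).
  - exact (maximal_meet_closed x y A A_cons A_max).
  - exact (maximal_join_prime x y A A_cons A_max).
  - exact (maximal_mem_x x y A A_cons A_max).
  - exact (maximal_not_mem_y x y A A_cons).
Qed.

Lemma prime_filter_inf F l m : prime_filter T le F -> (exists p, F p) -> length l < 3 ->
  is_inf T le (fun s => In s l) m -> F m <-> (forall s, In s l -> F s).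
Proof.
  intros [Fup [Fmeet _]] [p Fp] Hlen Hinf; split.
  - intros Fm s Hs; exact (Fup m s Fm (proj1 Hinf s Hs)).
  - destruct l as [|a [|b [|? ?]]]; simpl in Hlen; try lia; intros Hl.
    + apply (Fup p); [exact Fp|apply (proj2 Hinf); intros s []].
    + apply (Fup a); [apply Hl; simpl; auto|].
      apply (proj2 Hinf); intros s [<-|[]]; apply le_refl.
    + apply (Fmeet a b); [apply Hl; simpl; auto..|apply is_inf_pair, Hinf].
Qed.

Lemma prime_filter_sup F l j : prime_filter T le F -> (exists q, ~ F q) -> length l < 3 ->
  is_sup T le (fun s => In s l) j -> F j <-> (exists s, In s l /\ F s).
Proof.
  intros [Fup [_ Fjoin]] [q Fq] Hlen Hsup; split.
  2: intros [s [Hs Fs]]; exact (Fup s j Fs (proj1 Hsup s Hs)).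
  destruct l as [|a [|b [|? ?]]]; simpl in Hlen; try lia; intros Fj.
  - exfalso; apply Fq, (Fup j); [exact Fj|apply (proj2 Hsup); intros s []].
  - exists a; split; [simpl; auto|].
    apply (Fup j); [exact Fj|apply (proj2 Hsup); intros s [<-|[]]; apply le_refl].
  - destruct (Fjoin a b j Fj (proj1 (is_sup_pair T le a b j) Hsup)); [exists a|exists b]; simpl; auto.
Qed.

Lemma representation_of_separation :
  (forall x y, ~ le x y -> exists F, prime_filter T le F /\ F x /\ ~ F y) ->
  three_representable T le.
Proof.
  intros Hsep.
  exists {F : T -> Prop | prime_filter T le F /\ (exists p, F p) /\ (exists q, ~ F q)},
    (fun p F => proj1_sig F p).
  split; [|split].
  - intros p q; split.
    + intros Hpq [F [[Fup ?] ?]] Fp; exact (Fup p q Fp Hpq).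
    + intros Hincl; apply NNPP; intros Npq.
      destruct (Hsep p q Npq) as [F [HF [Fp Fq]]].
      exact (Fq (Hincl (exist _ F (conj HF (conj (ex_intro _ p Fp) (ex_intro _ q Fq)))) Fp)).
  - intros l m Hlen Hinf [F [HF [Fne ?]]]; exact (prime_filter_inf F l m HF Fne Hlen Hinf).
  - intros l j Hlen Hsup [F [HF [? Fprop]]]; exact (prime_filter_sup F l j HF Fprop Hlen Hsup).
Qed.

End Separation.

Theorem theorem4p3 (T : Type) (le : T -> T -> Prop) (HP : is_poset T le) :
  three_representable T le <-> (forall n : nat, psi T le n).
Proof.
  split; [apply psi_of_representation|intros Hpsi].
  apply representation_of_separation; [apply HP|].
  intros x y Hxy; apply prime_filter_separation; [apply HP|].
  exact (fun n => Hpsi n x y Hxy).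
Qed.
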